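(* The type-independent absolute robustness $M_{\mathrm{abs}}$ is a type-independent LOSR monotone: for every nonsignaling resource $R$ (of arbitrary type and dimensions) and every LOSR-free transformation $\tau$ (possibly changing the type and dimensions of the resource), $M_{\mathrm{abs}}(\tau[R])\le M_{\mathrm{abs}}(R)$.
   Context: Systems have a dimension and a type in $\{\mathsf{I},\mathsf{C},\mathsf{Q}\}$ (trivial = dimension 1, classical, quantum). A bipartite resource with Alice's input/output $\mathcal{X},\mathcal{A}$ and Bob's input/output $\mathcal{Y},\mathcal{B}$ is a completely positive linear map from operators on $\mathcal{X}\otimes\mathcal{Y}$ to operators on $\mathcal{A}\otimes\mathcal{B}$, trace preserving on product inputs, nonsignaling in both directions, and with classicality constraints (classical output $\mathcal{A}$: $\langle i|R[\cdot]|j\rangle_{\mathcal{A}}=0$ for $i\neq j$; classical input $\mathcal{X}$: $R[|i\rangle\langle j|\otimes\psi]=0$ for $i\ne j$; similarly for Bob). It is LOSR-free if it equals $\sum_ip_iR^i_{\mathcal{A}|\mathcal{X}}\otimes R^i_{\mathcal{B}|\mathcal{Y}}$ with $(p_i)$ a probability distribution and single-party channels of the same types. $\mathbf{R}^{\mathrm{free}}$ denotes the set of LOSR-free resources of all types and dimensions. For a resource $R$, $M_{\mathrm{abs}}(R)=\min\{s\ge0:\ (R+sS)/(1+s)\in\mathbf{R}^{\mathrm{free}}\text{ for some LOSR-free }S\text{ with the same type and dimensions as }R\}$. An LOSR-free transformation is a map $\tau[R]=\sum_\lambda p_\lambda(\mathcal{E}^\lambda_{\mathcal{A}}\otimes\mathcal{E}^\lambda_{\mathcal{B}})\circ(R\otimes\mathrm{id}_{\mathcal{M}_A\mathcal{M}_B})\circ(\mathcal{P}^\lambda_{\mathcal{A}}\otimes\mathcal{P}^\lambda_{\mathcal{B}})$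 (a convex mixture of products of local supermaps: pre-processing channels $\mathcal{P}^\lambda_{\mathcal{A}}$ from a new input $\mathcal{X}'$ to $\mathcal{X}\otimes\mathcal{M}_A$ and post-processing channels $\mathcal{E}^\lambda_{\mathcal{A}}$ from $\mathcal{A}\otimes\mathcal{M}_A$ to a new output $\mathcal{A}'$, similarly for Bob), mapping resources of one type and dimension to resources of a (possibly different) type and dimension; it is linear and maps LOSR-free resources to LOSR-free resources. *)

From HB Require Import structures.
From mathcomp Require Import all_boot all_order all_algebra.
From mathcomp Require Import all_classical all_reals ereal.
From mathcomp.real_closed Require Import complex mxtens.


Unset Strict Implicit.
Unset Printing Implicit Defensive.

Import Order.TTheory GRing.Theory Num.Theory.
Local Open Scope ring_scope.
Local Open Scope complex_scope.

Definition mx_idx {m n : nat} (i : 'I_m) (j : 'I_n) : 'I_(m * n) :=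
  mxtens_index (i, j).

Definition is_linmap {R : realType} {m n : nat}
  (f : 'M[R[i]]_m -> 'M[R[i]]_n) : Prop :=
  forall (a : R[i]) (M N : 'M[R[i]]_m), f (a *: M + N) = a *: f M + f N.

Definition psd {R : realType} {n : nat} (A : 'M[R[i]]_n) : Prop :=
  forall v : 'cV[R[i]]_n,
    0 <= ((map_mx Num.conj v)^T *m A *m v) ord0 ord0.

Definition is_state {R : realType} {n : nat} (A : 'M[R[i]]_n) : Prop :=
  psd A /\ \tr A = 1.

(* tensor product f (x) g of linear maps, defined as the linear extension of
   E_{i1 j1} (x) E_{i2 j2} |-> f E_{i1 j1} (x) g E_{i2 j2} *)
Definition tmap {R : realType} {m1 n1 m2 n2 : nat}
  (f : 'M[R[i]]_m1 -> 'M[R[i]]_n1) (g : 'M[R[i]]_m2 -> 'M[R[i]]_n2)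
  : 'M[R[i]]_(m1 * m2) -> 'M[R[i]]_(n1 * n2) :=
  fun M => \sum_(i1 < m1) \sum_(j1 < m1) \sum_(i2 < m2) \sum_(j2 < m2)
      M (mx_idx i1 i2) (mx_idx j1 j2) *: (f (delta_mx i1 j1) *t g (delta_mx i2 j2)).

Definition idmapM {R : realType} (k : nat) : 'M[R[i]]_k -> 'M[R[i]]_k :=
  fun X => X.

Definition is_CP {R : realType} {m n : nat} (f : 'M[R[i]]_m -> 'M[R[i]]_n) : Prop :=
  forall (k : nat) (M : 'M[R[i]]_(k * m)), psd M -> psd (tmap (@idmapM R k) f M).

Definition ptraceB {R : realType} {a b : nat} (M : 'M[R[i]]_(a * b)) : 'M[R[i]]_a :=
  \matrix_(i, j) \sum_(k < b) M (mx_idx i k) (mx_idx j k).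
Definition ptraceA {R : realType} {a b : nat} (M : 'M[R[i]]_(a * b)) : 'M[R[i]]_b :=
  \matrix_(i, j) \sum_(k < a) M (mx_idx k i) (mx_idx k j).

Inductive systype := Ttriv | Tclass | Tquant.

Record system := Sys { stype : systype; sdim : nat }.

Definition valid_system (s : system) : Prop :=
  (0 < sdim s)%N /\ (stype s = Ttriv -> sdim s = 1%N).

Definition classical (s : system) : Prop := stype s = Tclass.

(* a bipartite scenario: Alice's input X / output A, Bob's input Y / output B *)
Record scenario := Scen { sX : system; sA : system; sY : system; sB : system }.

Definition valid_scenario (sc : scenario) : Prop :=
  [/\ valid_system (sX sc), valid_system (sA sc),
      valid_system (sY sc) & valid_system (sB sc)].

Definition resmap (R : realType) (sc : scenario) : Type :=
  'M[R[i]]_(sdim (sX sc) * sdim (sY sc)) -> 'M[R[i]]_(sdim (sA sc) * sdim (sB sc)).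

Definition class_out_left {R : realType} {p a b : nat}
  (f : 'M[R[i]]_p -> 'M[R[i]]_(a * b)) : Prop :=
  forall (M : 'M[R[i]]_p) (i j : 'I_a) (k l : 'I_b),
    i != j -> f M (mx_idx i k) (mx_idx j l) = 0.
Definition class_out_right {R : realType} {p a b : nat}
  (f : 'M[R[i]]_p -> 'M[R[i]]_(a * b)) : Prop :=
  forall (M : 'M[R[i]]_p) (i j : 'I_a) (k l : 'I_b),
    k != l -> f M (mx_idx i k) (mx_idx j l) = 0.
Definition class_in_left {R : realType} {x y q : nat}
  (f : 'M[R[i]]_(x * y) -> 'M[R[i]]_q) : Prop :=
  forall (i j : 'I_x) (psi : 'M[R[i]]_y), i != j -> f (delta_mx i j *t psi) = 0.
Definition class_in_right {R : realType} {x y q : nat}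
  (f : 'M[R[i]]_(x * y) -> 'M[R[i]]_q) : Prop :=
  forall (psi : 'M[R[i]]_x) (i j : 'I_y), i != j -> f (psi *t delta_mx i j) = 0.

Definition is_resource {R : realType} (sc : scenario) (Rm : resmap R sc) : Prop :=
  [/\ is_linmap Rm /\ is_CP Rm,
      (forall rh sg, \tr (Rm (rh *t sg)) = \tr (rh *t sg)),
      (forall rh sg sg2, is_state rh -> is_state sg -> is_state sg2 ->
         ptraceB (Rm (rh *t sg)) = ptraceB (Rm (rh *t sg2))),
      (forall rh rh2 sg, is_state rh -> is_state rh2 -> is_state sg ->
         ptraceA (Rm (rh *t sg)) = ptraceA (Rm (rh2 *t sg))) &
      [/\ classical (sA sc) -> class_out_left Rm, classical (sB sc) -> class_out_right Rm,
          classical (sX sc) -> class_in_left Rm & classical (sY sc) -> class_in_right Rm]].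

(* single-party channels (CPTP), with optional classical input / output *)
Definition is_channel {R : realType} {m n : nat} (cin cout : Prop)
  (f : 'M[R[i]]_m -> 'M[R[i]]_n) : Prop :=
  [/\ is_linmap f, is_CP f, (forall M, \tr (f M) = \tr M),
      (cin -> forall i j : 'I_m, i != j -> f (delta_mx i j) = 0) &
      (cout -> forall (M : 'M[R[i]]_m) (i j : 'I_n), i != j -> f M i j = 0)].

Definition is_losr_free {R : realType} (sc : scenario) (Rm : resmap R sc) : Prop :=
  exists (n : nat) (p : 'I_n -> R)
    (RA : 'I_n -> 'M[R[i]]_(sdim (sX sc)) -> 'M[R[i]]_(sdim (sA sc)))
    (RB : 'I_n -> 'M[R[i]]_(sdim (sY sc)) -> 'M[R[i]]_(sdim (sB sc))),
    [/\ (forall l, 0 <= p l), \sum_(l < n) p l = 1,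
        (forall l, is_channel (classical (sX sc)) (classical (sA sc)) (RA l)),
        (forall l, is_channel (classical (sY sc)) (classical (sB sc)) (RB l)) &
        (forall M, Rm M = \sum_(l < n) (p l)%:C *: tmap (RA l) (RB l) M)].

Definition mixmap {R : realType} (sc : scenario) (s : R) (Rm S : resmap R sc)
  : resmap R sc :=
  fun M => ((1 + s)^-1)%:C *: (Rm M + s%:C *: S M).

Definition robust_set {R : realType} (sc : scenario) (Rm : resmap R sc) : set R :=
  [set s | 0 <= s /\ exists S : resmap R sc,
             is_losr_free sc S /\ is_losr_free sc (mixmap sc s Rm S)].

(* absolute robustness (infimum; +oo if no admissible s) *)
Definition Mabs {R : realType} (sc : scenario) (Rm : resmap R sc) : \bar R :=
  ereal_inf [set x%:E | x in robust_set sc Rm].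

(* reordering (a (x) b) (x) (c (x) d) ~> (a (x) c) (x) (b (x) d) *)
Definition swap_idx {a b c d : nat} (u : 'I_((a * c) * (b * d))) : 'I_((a * b) * (c * d)) :=
  let ac := (mxtens_unindex u).1 in
  let bd := (mxtens_unindex u).2 in
  mx_idx (mx_idx (mxtens_unindex ac).1 (mxtens_unindex bd).1)
         (mx_idx (mxtens_unindex ac).2 (mxtens_unindex bd).2).

Definition swapmid {R : realType} {a b c d : nat} (M : 'M[R[i]]_((a * b) * (c * d)))
  : 'M[R[i]]_((a * c) * (b * d)) :=
  \matrix_(u, v) M (swap_idx u) (swap_idx v).

(* (E_A (x) E_B) o (Rm (x) id_{M_A M_B}) o (P_A (x) P_B), with the tensor factors
   reordered appropriately *)
Definition wired {R : realType} {x' y' x y a b ma mb a' b' : nat}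
  (PA : 'M[R[i]]_x' -> 'M[R[i]]_(x * ma)) (PB : 'M[R[i]]_y' -> 'M[R[i]]_(y * mb))
  (EA : 'M[R[i]]_(a * ma) -> 'M[R[i]]_a') (EB : 'M[R[i]]_(b * mb) -> 'M[R[i]]_b')
  (Rm : 'M[R[i]]_(x * y) -> 'M[R[i]]_(a * b))
  : 'M[R[i]]_(x' * y') -> 'M[R[i]]_(a' * b') :=
  fun M => tmap EA EB (swapmid (tmap Rm (@idmapM R (ma * mb)) (swapmid (tmap PA PB M)))).

Definition is_losr_transform {R : realType} (sc sc' : scenario)
  (T : resmap R sc -> resmap R sc') : Prop :=
  exists (n : nat) (p : 'I_n -> R) (ma mb : 'I_n -> nat)
    (PA : forall l : 'I_n, 'M[R[i]]_(sdim (sX sc')) -> 'M[R[i]]_(sdim (sX sc) * ma l))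
    (PB : forall l : 'I_n, 'M[R[i]]_(sdim (sY sc')) -> 'M[R[i]]_(sdim (sY sc) * mb l))
    (EA : forall l : 'I_n, 'M[R[i]]_(sdim (sA sc) * ma l) -> 'M[R[i]]_(sdim (sA sc')))
    (EB : forall l : 'I_n, 'M[R[i]]_(sdim (sB sc) * mb l) -> 'M[R[i]]_(sdim (sB sc'))),
    [/\ (forall l, 0 < ma l /\ 0 < mb l)%N,
        (forall l, 0 <= p l) /\ \sum_(l < n) p l = 1,
        (forall l, is_channel (classical (sX sc')) False (PA l))
          /\ (forall l, is_channel (classical (sY sc')) False (PB l)),
        (forall l, is_channel False (classical (sA sc')) (EA l))
          /\ (forall l, is_channel False (classical (sB sc')) (EB l)) &
        (forall (Rm : resmap R sc) M,
           T Rm M = \sum_(l < n) (p l)%:C *: wired (PA l) (PB l) (EA l) (EB l) Rm M)].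

From HB Require Import structures.
From mathcomp Require Import all_boot all_order all_algebra.
From mathcomp Require Import all_classical all_reals ereal.
From mathcomp.real_closed Require Import complex mxtens.

(* M_abs(R) is the infimum of the admissible weights s, those for which some
   LOSR-free S makes (R + s S)/(1 + s) LOSR-free.  An LOSR-free transformation
   tau is linear in the resource, so tau[(R + s S)/(1 + s)] is
   (tau[R] + s tau[S])/(1 + s); and it maps LOSR-free resources to LOSR-free
   ones, because wiring a product of local channels yields a product of local
   channels "post-processing o (channel (x) id_memory) o pre-processing", which
   are again channels of the required types.  Hence every weight admissible for
   R is admissible for tau[R], and the infimum can only decrease. *)

Import Order.TTheory GRing.Theory Num.Theory.
Local Open Scope ring_scope.
Local Open Scope complex_scope.

Lemma pair_big_mxtens {V : zmodType} {n m} (G : 'I_n -> 'I_m -> V) :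
  \sum_(l < n) \sum_(k < m) G l k
  = \sum_(u < n * m) G (mxtens_unindex u).1 (mxtens_unindex u).2.
Proof.
rewrite pair_big; apply: reindex => /=.
by exists (@mxtens_index n m) => u; rewrite (mxtens_indexK, mxtens_unindexK).
Qed.

Section TensorProduct.
Variable K : comPzRingType.

Lemma eq_mx_idx {m n} (i k : 'I_m) (j l : 'I_n) :
  (mx_idx i j == mx_idx k l) = (i == k) && (j == l).
Proof.
apply/eqP/andP => [/(congr1 (@mxtens_unindex m n))|[/eqP-> /eqP->] //].
by rewrite /mx_idx !mxtens_indexK => -[-> ->].
Qed.

Lemma matrix_tensP {m n p q} (A B : 'M[K]_(m * n, p * q)) :
  (forall i j k l, A (mx_idx i j) (mx_idx k l) = B (mx_idx i j) (mx_idx k l)) ->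
  A = B.
Proof.
move=> eqAB; apply/matrixP => u v.
by case: (mxtens_indexP u) => i j; case: (mxtens_indexP v) => k l; apply: eqAB.
Qed.

Lemma tensmxDl {m n p q} (A B : 'M[K]_(m, n)) (D : 'M[K]_(p, q)) :
  (A + B) *t D = A *t D + B *t D.
Proof. by apply/matrixP => u v; rewrite !mxE mulrDl. Qed.

Lemma tensmxDr {m n p q} (D : 'M[K]_(m, n)) (A B : 'M[K]_(p, q)) :
  D *t (A + B) = D *t A + D *t B.
Proof. by apply/matrixP => u v; rewrite !mxE mulrDr. Qed.

Lemma tensmxZl {m n p q} a (A : 'M[K]_(m, n)) (D : 'M[K]_(p, q)) :
  (a *: A) *t D = a *: (A *t D).
Proof. by apply/matrixP => u v; rewrite !mxE mulrA. Qed.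

Lemma tensmxZr {m n p q} a (D : 'M[K]_(m, n)) (A : 'M[K]_(p, q)) :
  D *t (a *: A) = a *: (D *t A).
Proof. by apply/matrixP => u v; rewrite !mxE mulrCA. Qed.

Lemma tensmx_suml {m n p q} I (r : seq I) (P : pred I) (F : I -> 'M[K]_(m, n))
    (D : 'M[K]_(p, q)) :
  (\sum_(i <- r | P i) F i) *t D = \sum_(i <- r | P i) F i *t D.
Proof. by apply: (big_morph (fun A => A *t D)) => [A B|]; rewrite ?tensmxDl ?tens0mx. Qed.

Lemma tensmx_sumr {m n p q} I (r : seq I) (P : pred I) (F : I -> 'M[K]_(p, q))
    (D : 'M[K]_(m, n)) :
  D *t (\sum_(i <- r | P i) F i) = \sum_(i <- r | P i) D *t F i.
Proof. by apply: (big_morph (fun A => D *t A)) => [A B|]; rewrite ?tensmxDr ?tensmx0. Qed.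

Lemma delta_mx_tens {m n} (i1 j1 : 'I_m) (i2 j2 : 'I_n) :
  delta_mx (mx_idx i1 i2) (mx_idx j1 j2) = delta_mx i1 j1 *t delta_mx i2 j2 :> 'M[K]_(m * n).
Proof.
apply: matrix_tensP => i j k l; rewrite tensmxE !mxE !eq_mx_idx.
by case: (i == i1); case: (j == i2); case: (k == j1); case: (l == j2);
  rewrite ?mulr1 ?mulr0.
Qed.

Lemma mxtrace_tens {m n} (A : 'M[K]_m) (B : 'M[K]_n) : \tr (A *t B) = \tr A * \tr B.
Proof. by rewrite /mxtrace mulr_sum; apply: eq_bigr => u _; rewrite mxE. Qed.

End TensorProduct.

Section LOSR.
Variable R : realType.
Local Notation C := R[i].

Section Basics.
Context {m n : nat} {f : 'M[C]_m -> 'M[C]_n}.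
Hypothesis linf : is_linmap f.

Lemma linmapD M N : f (M + N) = f M + f N.
Proof. by have := linf 1 M N; rewrite !scale1r. Qed.

Lemma linmap0 : f 0 = 0.
Proof. by apply: (addrI (f 0)); rewrite -linmapD !addr0. Qed.

Lemma linmapZ a M : f (a *: M) = a *: f M.
Proof. by rewrite -[a *: M]addr0 linf linmap0 addr0. Qed.

Lemma linmap_sum I (r : seq I) (P : pred I) (F : I -> 'M[C]_m) :
  f (\sum_(i <- r | P i) F i) = \sum_(i <- r | P i) f (F i).
Proof. exact: (big_morph f linmapD linmap0). Qed.

Lemma linmap_expand M : f M = \sum_i \sum_j M i j *: f (delta_mx i j).
Proof.
rewrite {1}(matrix_sum_delta M) linmap_sum; apply: eq_bigr => i _.
by rewrite linmap_sum; apply: eq_bigr => j _; rewrite linmapZ.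
Qed.

End Basics.

Lemma linmap_ext {m n} (f g : 'M[C]_m -> 'M[C]_n) : is_linmap f -> is_linmap g ->
  (forall i j, f (delta_mx i j) = g (delta_mx i j)) -> f =1 g.
Proof.
move=> linf ling eqfg M; rewrite (linmap_expand linf) (linmap_expand ling).
by apply: eq_bigr => i _; apply: eq_bigr => j _; rewrite eqfg.
Qed.

Lemma linmap_ext_tens {m1 m2 n} (f g : 'M[C]_(m1 * m2) -> 'M[C]_n) :
  is_linmap f -> is_linmap g ->
  (forall i1 j1 i2 j2, f (delta_mx i1 j1 *t delta_mx i2 j2)
                     = g (delta_mx i1 j1 *t delta_mx i2 j2)) ->
  f =1 g.
Proof.
move=> linf ling eqfg; apply: linmap_ext => // u v.
by case: (mxtens_indexP u) => i1 i2; case: (mxtens_indexP v) => j1 j2; rewrite delta_mx_tens.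
Qed.

Lemma linmap_comp {m n p} {f : 'M[C]_n -> 'M[C]_p} {g : 'M[C]_m -> 'M[C]_n} :
  is_linmap f -> is_linmap g -> is_linmap (f \o g).
Proof. by move=> linf ling a M N /=; rewrite ling linf. Qed.


Lemma linmap_mxsub {m n} (h : 'I_n -> 'I_m) : is_linmap (mxsub h h : 'M[C]_m -> 'M[C]_n).
Proof. by move=> a M N; rewrite linearP. Qed.

Lemma linmap_id k : is_linmap (@idmapM R k).
Proof. by []. Qed.

Lemma linmap_tmap {m1 n1 m2 n2} (f : 'M[C]_m1 -> 'M[C]_n1) (g : 'M[C]_m2 -> 'M[C]_n2) :
  is_linmap (tmap f g).
Proof.
move=> a M N; rewrite /tmap scaler_sumr -big_split; apply: eq_bigr => i1 _.
rewrite scaler_sumr -big_split; apply: eq_bigr => j1 _.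
rewrite scaler_sumr -big_split; apply: eq_bigr => i2 _.
rewrite scaler_sumr -big_split; apply: eq_bigr => j2 _.
by rewrite !mxE scalerA scalerDl.
Qed.

Local Hint Resolve linmap_id linmap_tmap : core.

Section TensorOfMaps.
Context {m1 n1 m2 n2 : nat}.
Implicit Types (f : 'M[C]_m1 -> 'M[C]_n1) (g : 'M[C]_m2 -> 'M[C]_n2).

Lemma tmap_tens f g A B : is_linmap f -> is_linmap g -> tmap f g (A *t B) = f A *t g B.
Proof.
move=> linf ling; rewrite (linmap_expand linf A) (linmap_expand ling B) /tmap.
rewrite tensmx_suml; apply: eq_bigr => i1 _; rewrite tensmx_suml; apply: eq_bigr => j1 _.
rewrite tensmxZl tensmx_sumr scaler_sumr; apply: eq_bigr => i2 _.
rewrite tensmx_sumr scaler_sumr; apply: eq_bigr => j2 _.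
by rewrite tensmxZr scalerA tensmxE.
Qed.

Lemma tmap_lincombl (F G : 'M[C]_m1 -> 'M[C]_n1) g a b X :
  tmap (fun N => a *: F N + b *: G N) g X = a *: tmap F g X + b *: tmap G g X.
Proof.
rewrite /tmap !scaler_sumr -big_split; apply: eq_bigr => i1 _.
rewrite !scaler_sumr -big_split; apply: eq_bigr => j1 _.
rewrite !scaler_sumr -big_split; apply: eq_bigr => i2 _.
rewrite !scaler_sumr -big_split; apply: eq_bigr => j2 _.
by rewrite tensmxDl !tensmxZl scalerDr !scalerA mulrC [_ * b]mulrC.
Qed.

Lemma tmap0l g X : tmap (fun _ : 'M[C]_m1 => 0 : 'M[C]_n1) g X = 0.
Proof.
rewrite /tmap big1 // => i1 _; rewrite big1 // => j1 _; rewrite big1 // => i2 _.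
by rewrite big1 // => j2 _; rewrite tens0mx scaler0.
Qed.

Lemma mxtrace_tmap f g X : is_linmap f -> is_linmap g ->
  (forall M, \tr (f M) = \tr M) -> (forall M, \tr (g M) = \tr M) ->
  \tr (tmap f g X) = \tr X.
Proof.
move=> linf ling trf trg.
rewrite (linmap_expand (linmap_tmap f g) X) {2}(matrix_sum_delta X) !raddf_sum /=.
apply: eq_bigr => u _; rewrite !raddf_sum /=; apply: eq_bigr => v _; rewrite !mxtraceZ.
case: (mxtens_indexP u) => i1 i2; case: (mxtens_indexP v) => j1 j2.
by rewrite delta_mx_tens tmap_tens // !mxtrace_tens trf trg.
Qed.

End TensorOfMaps.

Lemma tmap_comp {m1 n1 p1 m2 n2 p2}
    {f1 : 'M[C]_n1 -> 'M[C]_p1} {g1 : 'M[C]_m1 -> 'M[C]_n1}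
    {f2 : 'M[C]_n2 -> 'M[C]_p2} {g2 : 'M[C]_m2 -> 'M[C]_n2} :
  is_linmap f1 -> is_linmap g1 -> is_linmap f2 -> is_linmap g2 ->
  tmap (f1 \o g1) (f2 \o g2) =1 tmap f1 f2 \o tmap g1 g2.
Proof.
move=> lf1 lg1 lf2 lg2; apply: linmap_ext_tens => [||i1 j1 i2 j2].
- exact: linmap_tmap.
- exact: linmap_comp.
by rewrite /= !tmap_tens //; exact: linmap_comp.
Qed.

Lemma psd_congr {m n} (B : 'M[C]_(m, n)) (A : 'M[C]_m) :
  psd A -> psd ((map_mx Num.conj B)^T *m A *m B).
Proof. by move=> psdA v; have := psdA (B *m v); rewrite map_mxM trmx_mul !mulmxA. Qed.

Lemma psd_mxsub {m n} (h : 'I_n -> 'I_m) (A : 'M[C]_m) : psd A -> psd (mxsub h h A).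
Proof.
move=> /(psd_congr (colsub h 1%:M)).
have -> : map_mx Num.conj (colsub h 1%:M) = colsub h 1%:M :> 'M[C]_(m, n).
  by rewrite map_mxsub map_mx1.
by rewrite trmx_mxsub trmx1 -rowsubE mulmx_colsub mulmx1 -mxsubcr.
Qed.

Lemma CP_comp {m n p} (f : 'M[C]_n -> 'M[C]_p) (g : 'M[C]_m -> 'M[C]_n) :
  is_linmap f -> is_linmap g -> is_CP f -> is_CP g -> is_CP (f \o g).
Proof.
move=> linf ling cpf cpg k M psdM.
have -> : tmap (idmapM k) (f \o g) M = tmap (idmapM k) f (tmap (idmapM k) g M).
  exact: (tmap_comp (linmap_id k) (linmap_id k) linf ling M).
exact/cpf/cpg.
Qed.

Definition shuffle_idx {k a b} (u : 'I_(k * (a * b))) : 'I_((k * b) * a) :=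
  let v := mxtens_unindex u in let w := mxtens_unindex v.2 in
  mx_idx (mx_idx v.1 w.2) w.1.

Definition unshuffle_idx {k a b} (u : 'I_((k * b) * a)) : 'I_(k * (a * b)) :=
  let v := mxtens_unindex u in let w := mxtens_unindex v.1 in
  mx_idx w.1 (mx_idx v.2 w.2).

Lemma mxsub_shuffle_tens {k a b} (A : 'M[C]_k) (B : 'M[C]_b) (D : 'M[C]_a) :
  mxsub shuffle_idx shuffle_idx ((A *t B) *t D) = A *t (D *t B).
Proof.
apply: matrix_tensP => i j u v.
case: (mxtens_indexP j) => x y; case: (mxtens_indexP v) => z w.
by rewrite mxE /shuffle_idx /mx_idx !mxtens_indexK !tensmxE mulrAC mulrA.
Qed.

Lemma mxsub_unshuffle_tens {k a b} (A : 'M[C]_k) (B : 'M[C]_b) (D : 'M[C]_a) :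
  mxsub unshuffle_idx unshuffle_idx (A *t (D *t B)) = (A *t B) *t D.
Proof.
apply: matrix_tensP => iy x jw z.
case: (mxtens_indexP iy) => i y; case: (mxtens_indexP jw) => j w.
by rewrite mxE /unshuffle_idx /mx_idx !mxtens_indexK !tensmxE mulrAC mulrA.
Qed.

Lemma CP_tmap_id {m n} (S : 'M[C]_m -> 'M[C]_n) k :
  is_linmap S -> is_CP S -> is_CP (tmap S (idmapM k)).
Proof.
move=> linS cpS l M psdM.
(* up to a reordering of the tensor factors, id_l (x) (S (x) id_k) is id_(l k) (x) S *)
have reorder : tmap (idmapM l) (tmap S (idmapM k)) =1
    mxsub shuffle_idx shuffle_idx \o tmap (idmapM (l * k)) S \o mxsub unshuffle_idx unshuffle_idx.
  apply: linmap_ext_tens => [||i j u v]; first exact: linmap_tmap.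
    apply: linmap_comp; [apply: linmap_comp; [exact: linmap_mxsub | exact: linmap_tmap] | exact: linmap_mxsub].
  case: (mxtens_indexP u) => x1 y1; case: (mxtens_indexP v) => x2 y2.
  by rewrite /= delta_mx_tens !tmap_tens // mxsub_unshuffle_tens tmap_tens // mxsub_shuffle_tens.
by rewrite reorder; apply/psd_mxsub/cpS/psd_mxsub.
Qed.

Lemma is_channel_comp {m' m k n n'} {cin cout cS1 cS2 : Prop}
    {P : 'M[C]_m' -> 'M[C]_(m * k)} {S : 'M[C]_m -> 'M[C]_n} {E : 'M[C]_(n * k) -> 'M[C]_n'} :
  is_channel cin False P -> is_channel cS1 cS2 S -> is_channel False cout E ->
  is_channel cin cout (E \o tmap S (idmapM k) \o P).
Proof.
case=> linP cpP trP inP _ [linS cpS trS _ _] [linE cpE trE _ outE].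
have linES : is_linmap (E \o tmap S (idmapM k)) by apply: linmap_comp.
split.
- exact: linmap_comp.
- by apply: CP_comp => //; apply: CP_comp => //; apply: CP_tmap_id.
- by move=> M; rewrite /= trE mxtrace_tmap // trP.
- by move=> classin i j neqij; rewrite /= inP // !linmap0.
- by move=> classout M i j neqij; apply: outE.
Qed.

Lemma linmap_swapmid {a b c d} : is_linmap (@swapmid R a b c d).
Proof. by move=> k M N; apply/matrixP => u v; rewrite !mxE. Qed.

Lemma swapmid_tens {a b c d} (A1 : 'M[C]_a) (A2 : 'M[C]_b) (B1 : 'M[C]_c) (B2 : 'M[C]_d) :
  swapmid ((A1 *t A2) *t (B1 *t B2)) = (A1 *t B1) *t (A2 *t B2).
Proof.
apply: matrix_tensP => i1 i2 j1 j2.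
case: (mxtens_indexP i1) => a1 c1; case: (mxtens_indexP i2) => b1 d1.
case: (mxtens_indexP j1) => a2 c2; case: (mxtens_indexP j2) => b2 d2.
rewrite mxE /swap_idx /mx_idx !mxtens_indexK !tensmxE.
by rewrite !mulrA; congr (_ * _); rewrite mulrAC.
Qed.

Lemma swapmid_tmap {x y a b ka kb} (SA : 'M[C]_x -> 'M[C]_a) (SB : 'M[C]_y -> 'M[C]_b) :
  is_linmap SA -> is_linmap SB ->
  swapmid \o tmap (tmap SA SB) (idmapM (ka * kb)) \o swapmid
  =1 tmap (tmap SA (idmapM ka)) (tmap SB (idmapM kb)).
Proof.
move=> linSA linSB; apply: linmap_ext_tens => [||u1 v1 u2 v2].
- apply: linmap_comp; [apply: linmap_comp |]; [exact: linmap_swapmid | exact: linmap_tmap | exact: linmap_swapmid].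
- exact: linmap_tmap.
case: (mxtens_indexP u1) => i1 j1; case: (mxtens_indexP v1) => k1 l1.
case: (mxtens_indexP u2) => i2 j2; case: (mxtens_indexP v2) => k2 l2.
by rewrite /= !delta_mx_tens swapmid_tens !tmap_tens // swapmid_tens.
Qed.

Section Wiring.
Variables (x' y' x y a b ka kb a' b' : nat).
Variables (PA : 'M[C]_x' -> 'M[C]_(x * ka)) (PB : 'M[C]_y' -> 'M[C]_(y * kb)).
Variables (EA : 'M[C]_(a * ka) -> 'M[C]_a') (EB : 'M[C]_(b * kb) -> 'M[C]_b').
Local Notation wire := (wired PA PB EA EB).

Lemma wired_tmap (SA : 'M[C]_x -> 'M[C]_a) (SB : 'M[C]_y -> 'M[C]_b) :
  is_linmap PA -> is_linmap PB -> is_linmap EA -> is_linmap EB ->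
  is_linmap SA -> is_linmap SB ->
  wire (tmap SA SB) =1 tmap (EA \o tmap SA (idmapM ka) \o PA) (EB \o tmap SB (idmapM kb) \o PB).
Proof.
move=> linPA linPB linEA linEB linSA linSB M.
have linSA' : is_linmap (tmap SA (idmapM ka)) by exact: linmap_tmap.
have linSB' : is_linmap (tmap SB (idmapM kb)) by exact: linmap_tmap.
rewrite (tmap_comp (linmap_comp linEA linSA') linPA (linmap_comp linEB linSB') linPB) /=.
rewrite (tmap_comp linEA linSA' linEB linSB') /=.
by rewrite -swapmid_tmap.
Qed.

Lemma wired_lincomb (F G : 'M[C]_(x * y) -> 'M[C]_(a * b)) c d M :
  wire (fun N => c *: F N + d *: G N) M = c *: wire F M + d *: wire G M.
Proof.
rewrite /wired tmap_lincombl (linmapD linmap_swapmid) !(linmapZ linmap_swapmid).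
by rewrite (linmapD (linmap_tmap _ _)) !(linmapZ (linmap_tmap _ _)).
Qed.

Lemma wired0 M : wire (fun _ => 0) M = 0.
Proof. by rewrite /wired tmap0l (linmap0 linmap_swapmid) (linmap0 (linmap_tmap _ _)). Qed.

Lemma wired_sum n (c : 'I_n -> C) (F : 'I_n -> 'M[C]_(x * y) -> 'M[C]_(a * b)) M :
  wire (fun N => \sum_(k < n) c k *: F k N) M = \sum_(k < n) c k *: wire (F k) M.
Proof.
elim: n c F => [|n IHn] c F.
  by rewrite big_ord0 -(wired0 M); congr wired; apply: funext => N; rewrite big_ord0.
rewrite big_ord_recr /= -[X in X + _]scale1r -IHn -wired_lincomb.
by congr wired; apply: funext => N; rewrite big_ord_recr scale1r.
Qed.

End Wiring.

Lemma is_losr_free_pairs {sc : scenario} {n m} {p : 'I_n -> R} {q : 'I_m -> R}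
    {RA : 'I_n -> 'I_m -> 'M[C]_(sdim (sX sc)) -> 'M[C]_(sdim (sA sc))}
    {RB : 'I_n -> 'I_m -> 'M[C]_(sdim (sY sc)) -> 'M[C]_(sdim (sB sc))}
    {F : resmap R sc} :
  (forall l, 0 <= p l) -> \sum_(l < n) p l = 1 ->
  (forall k, 0 <= q k) -> \sum_(k < m) q k = 1 ->
  (forall l k, is_channel (classical (sX sc)) (classical (sA sc)) (RA l k)) ->
  (forall l k, is_channel (classical (sY sc)) (classical (sB sc)) (RB l k)) ->
  (forall M, F M = \sum_(l < n) (p l)%:C *: \sum_(k < m) (q k)%:C *: tmap (RA l k) (RB l k) M) ->
  is_losr_free sc F.
Proof.
move=> p_ge0 p_sum1 q_ge0 q_sum1 chA chB eqF.
pose l_of u := (@mxtens_unindex n m u).1; pose k_of u := (@mxtens_unindex n m u).2.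
exists (n * m)%N, (fun u => p (l_of u) * q (k_of u)),
  (fun u => RA (l_of u) (k_of u)), (fun u => RB (l_of u) (k_of u)); split => //.
- by move=> u; apply: mulr_ge0.
- by rewrite -mulr_sum p_sum1 q_sum1 mulr1.
move=> M; rewrite eqF -(pair_big_mxtens (fun l k => (p l * q k)%:C *: tmap (RA l k) (RB l k) M)).
apply: eq_bigr => l _; rewrite scaler_sumr; apply: eq_bigr => k _.
by rewrite scalerA rmorphM.
Qed.

Lemma mixmapE (sc : scenario) s (F G : resmap R sc) :
  mixmap sc s F G = fun N => ((1 + s)^-1)%:C *: F N + ((1 + s)^-1 * s)%:C *: G N.
Proof. by apply: funext => N; rewrite /mixmap scalerDr scalerA rmorphM. Qed.

Section Transformations.
Variables (sc sc' : scenario) (T : resmap R sc -> resmap R sc').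
Hypothesis losrT : is_losr_transform sc sc' T.

Lemma losr_transform_free (F : resmap R sc) : is_losr_free sc F -> is_losr_free sc' (T F).
Proof.
case: losrT => n [p [ka [kb [PA [PB [EA [EB [_ [p_ge0 p_sum1] [chPA chPB] [chEA chEB] eqT]]]]]]]].
case=> m [q [FA [FB [q_ge0 q_sum1 chFA chFB eqF]]]].
apply: (is_losr_free_pairs p_ge0 p_sum1 q_ge0 q_sum1
          (fun l k => is_channel_comp (chPA l) (chFA k) (chEA l))
          (fun l k => is_channel_comp (chPB l) (chFB k) (chEB l))) => M.
rewrite eqT; apply: eq_bigr => l _; rewrite (funext eqF) wired_sum; congr (_ *: _).
apply: eq_bigr => k _; rewrite wired_tmap //.
- by case: (chPA l).
- by case: (chPB l).
- by case: (chEA l).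
- by case: (chEB l).
- by case: (chFA k).
- by case: (chFB k).
Qed.

Lemma losr_transform_lincomb (F G : resmap R sc) c d M :
  T (fun N => c *: F N + d *: G N) M = c *: T F M + d *: T G M.
Proof.
case: losrT => n [p [ka [kb [PA [PB [EA [EB [_ _ _ _ eqT]]]]]]]].
rewrite !eqT !scaler_sumr -big_split; apply: eq_bigr => l _ /=.
by rewrite wired_lincomb scalerDr !scalerA mulrC [_ * d]mulrC.
Qed.

Lemma losr_transform_mixmap s (F G : resmap R sc) :
  T (mixmap sc s F G) = mixmap sc' s (T F) (T G).
Proof. by apply: funext => M; rewrite !mixmapE losr_transform_lincomb. Qed.

Lemma robust_set_transform (Rm : resmap R sc) :
  (robust_set sc Rm `<=` robust_set sc' (T Rm))%classic.
Proof.
move=> s [s_ge0 [S [freeS freeMix]]]; split=> //; exists (T S).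
split; first exact: losr_transform_free.
by rewrite -losr_transform_mixmap; apply: losr_transform_free.
Qed.

End Transformations.

End LOSR.

Theorem mainTheorem4 (R : realType) (sc sc' : scenario)
  (T : resmap R sc -> resmap R sc') (Rm : resmap R sc) :
  valid_scenario sc -> valid_scenario sc' ->
  is_resource sc Rm -> is_losr_transform sc sc' T ->
  (Mabs sc' (T Rm) <= Mabs sc Rm)%E.
Proof.
move=> _ _ _ losrT.
by apply: ereal_inf_le_tmp; apply: image_subset; apply: robust_set_transform.
Qed.
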